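(* Let $f:X\to S$ be a morphism of fine log schemes of characteristic $p$. If $D=(\delta,\partial):(\mathcal M_X,\mathcal O_X)\to\mathcal O_X$ is a log derivation over $S$, then so is $D^{(p)}:=(\partial^{p-1}\circ\delta+F_X^*\circ\delta,\ \partial^{(p)})$.
   Context: A log derivation of $X$ over $S$ is a pair $(\delta,\partial)$ with $\partial:\mathcal O_X\to\mathcal O_X$ an $\mathcal O_S$-linear derivation and $\delta:\mathcal M_X\to\mathcal O_X$ a monoid homomorphism (to the additive group) vanishing on the image of $f^{-1}\mathcal M_S$ and satisfying $\partial(\alpha(m))=\alpha(m)\delta(m)$ for $m\in\mathcal M_X$. Here $\partial^{(p)}:=\partial^p$ (the $p$-fold iterate), $\partial^{p-1}\circ\delta$ is $m\mapsto\partial^{p-1}(\delta(m))$, and $F_X^*\circ\delta$ is $m\mapsto\delta(m)^p$. *)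

From HB Require Import structures.
From mathcomp Require Import all_boot all_order all_algebra.
Set Implicit Arguments. Unset Strict Implicit. Unset Printing Implicit Defensive.
Import GRing.Theory.
Local Open Scope ring_scope.

(* Ring-level (sections over an open / affine chart) model of a log structure:
   a commutative monoid M (written additively), a commutative ring A, and
   alpha : M -> the multiplicative monoid of A a monoid morphism such that alpha restricts to an
   isomorphism alpha^{-1}(A^x) -> A^x. *)
Definition is_log_structure (A : comUnitRingType) (M : nmodType) (alpha : M -> A) : Prop :=
  [/\ alpha 0 = 1,
      (forall m m', alpha (m + m') = alpha m * alpha m') &
      (forall u : A, u \is a GRing.unit -> exists! m : M, alpha m = u)].

(* integrality of the monoid (part of "fine") *)
Definition integral_monoid (M : nmodType) : Prop :=
  forall m a b : M, m + a = m + b -> a = b.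

(* A morphism of log rings (X -> S) : phi = f^# : O_S -> O_X,
   beta = f^b : f^{-1} M_S -> M_X, compatible with the structure maps. *)
Definition is_log_morphism (R A : comUnitRingType) (N M : nmodType)
  (phi : R -> A) (alphaS : N -> R) (alphaX : M -> A) (beta : N -> M) : Prop :=
  [/\ beta 0 = 0, (forall n n', beta (n + n') = beta n + beta n') &
      (forall n, alphaX (beta n) = phi (alphaS n))].

Definition is_log_derivation (R A : comUnitRingType) (N M : nmodType)
  (phi : R -> A) (alphaX : M -> A) (beta : N -> M)
  (delta : M -> A) (der : A -> A) : Prop :=
  [/\ (forall a b, der (a + b) = der a + der b),
      (forall a b, der (a * b) = a * der b + b * der a),
      (forall r a, der (phi r * a) = phi r * der a) &
      [/\ delta 0 = 0,
        (forall m m', delta (m + m') = delta m + delta m'),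
        (forall n, delta (beta n) = 0) &
        (forall m, der (alphaX m) = alphaX m * delta m)]].

(* D^(p) = (der^{p-1} o delta + F_X^* o delta, der^p) *)
Definition logder_p_delta (A : comUnitRingType) (M : nmodType) (p : nat)
  (delta : M -> A) (der : A -> A) : M -> A :=
  fun m => iter p.-1 der (delta m) + (delta m) ^+ p.

Definition logder_p_der (A : comUnitRingType) (p : nat) (der : A -> A) : A -> A :=
  iter p der.

From HB Require Import structures.
From mathcomp Require Import all_boot all_order all_algebra ring.
Import GRing.Theory.
Local Open Scope ring_scope.
Set Implicit Arguments. Unset Strict Implicit.

(* Leibniz's rule for [D^p] has only the two extreme terms in characteristic
   [p], so [D^p] is a derivation; additivity of the new [delta] is the
   Frobenius.  The remaining compatibility [D^p (alpha m) = alpha m * delta' m]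
   is Hochschild's formula: if [D x = x f] then [D^n x = x T^n(1)] with
   [T a = D a + f a].  Splitting [T^n(1)] by degree in [f] into [c n i], the
   identity [sum_m C(n,m) c m 1 c (n-m) l = (l+1) c n (l+1)] taken at [n = p]
   kills every [c p i] with [1 < i < p], leaving
   [T^p(1) = c p 1 + c p p = D^(p-1) f + f^p]. *)

Lemma sum_binS (V : nmodType) (F : nat -> nat -> V) n :
  \sum_(m < n.+2) F m (n.+1 - m)%N *+ 'C(n.+1, m) =
  \sum_(m < n.+1) (F m.+1 (n - m)%N + F m (n.+1 - m)%N) *+ 'C(n, m).
Proof.
rewrite big_ord_recl subn0 bin0 mulr1n.
under eq_bigr => i _ do rewrite subSS binS mulrnDr.
under [RHS]eq_bigr => i _ do rewrite mulrnDl.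
rewrite !big_split /= addrA [RHS]addrC; congr (_ + _).
rewrite big_ord_recr /= bin_small // mulr0n addr0.
by rewrite [RHS]big_ord_recl /= subn0 bin0 mulr1n.
Qed.

Lemma pchar_mulrn_eq0 (R : nzRingType) p n (x : R) :
  p \in [pchar R] -> ~~ (p %| n)%N -> x *+ n = 0 -> x = 0.
Proof.
move=> pcharR p_ndvd_n xn0; have p_pr := pcharf_prime pcharR.
have p_coprime_n : coprime p n by rewrite prime_coprime.
have [a _] := Bezoutl n (prime_gt0 p_pr).
rewrite (eqP p_coprime_n) (dvdn_pcharf pcharR) => /eqP an1.
have := congr1 (fun y => x * y) an1.
by rewrite mulr0 natrD mulnC natrM mulrDr mulr1 mulrA [x * _%:R]mulr_natr xn0 mul0r addr0.
Qed.

Section Derivation.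
Variables (A : comNzRingType) (D : {additive A -> A}).
Hypothesis derM : forall a b, D (a * b) = a * D b + b * D a.

Lemma der1 : D 1 = 0.
Proof.
have := derM 1 1; rewrite !mul1r => D1D1.
by apply: (@addrI _ (D 1)); rewrite -D1D1 addr0.
Qed.

Lemma iter_der_nmod_morphism n : nmod_morphism (iter n D).
Proof.
elim: n => [|n [iter0 iterD]]; split=> [|a b] //=.
  by rewrite iter0 raddf0.
by rewrite iterD raddfD.
Qed.

Lemma iter_derM n a b :
  iter n D (a * b) = \sum_(m < n.+1) (iter m D a * iter (n - m) D b) *+ 'C(n, m).
Proof.
elim: n => [|n IH]; first by rewrite big_ord1 mulr1n.
rewrite [RHS](sum_binS (fun i j => iter i D a * iter j D b)) iterS IH raddf_sum.
apply: eq_bigr => m _; rewrite raddfMn /= derM subSn -1?ltnS //=.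
by congr (_ *+ _); ring.
Qed.

Lemma pchar_iter_derM p a b : p \in [pchar A] ->
  iter p D (a * b) = a * iter p D b + b * iter p D a.
Proof.
case: p => [/pcharf_prime //|q] pcharA.
rewrite iter_derM big_ord_recl big_ord_recr /= /bump /= !add0n subnn bin0 binn !mulr1n.
rewrite big1 ?add0r => [|m _]; first by rewrite [_ * iter 0 D b]mulrC.
by rewrite add1n -mulr_natr bin_lt_pcharf_0 ?mulr0 //= ltnS.
Qed.

Section HochschildFormula.
Variable f : A.

(* [twist_coef n i] is the part of degree [i] in [f] of [T^n(1)], where
   [T a = D a + f * a]. *)
Fixpoint twist_coef n i : A :=
  if n is n'.+1 then
    D (twist_coef n' i) + (if i is i'.+1 then f * twist_coef n' i' else 0)
  else (i == 0)%:R.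

Arguments twist_coef : simpl never.

Lemma twist_coef0 i : twist_coef 0 i = (i == 0)%:R.
Proof. by []. Qed.

Lemma twist_coefS n i : twist_coef n.+1 i =
  D (twist_coef n i) + (if i is i'.+1 then f * twist_coef n i' else 0).
Proof. by []. Qed.

Lemma twist_coefS0 n : twist_coef n.+1 0 = 0.
Proof.
elim: n => [|n IH]; rewrite twist_coefS addr0; first exact: der1.
by rewrite IH raddf0.
Qed.

Lemma twist_coef_small n i : (n < i)%N -> twist_coef n i = 0.
Proof.
elim: n i => [|n IH] [|i] // lt_ni.
by rewrite twist_coefS /= !IH ?raddf0 ?add0r ?mulr0 // ltnW.
Qed.

Lemma twist_coefS1 n : twist_coef n.+1 1 = iter n D f.
Proof.
elim: n => [|n IH]; first by rewrite twist_coefS /= !twist_coef0 raddf0 add0r mulr1.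
by rewrite twist_coefS /= IH twist_coefS0 mulr0 addr0.
Qed.

Lemma twist_coefnn n : twist_coef n n = f ^+ n.
Proof.
elim: n => [|n IH] //.
by rewrite twist_coefS /= IH twist_coef_small // raddf0 add0r exprS.
Qed.

Lemma iter_der_twist x n : D x = x * f ->
  iter n D x = x * \sum_(i < n.+1) twist_coef n i.
Proof.
move=> Dx; elim: n => [|n IH]; first by rewrite big_ord1 mulr1.
rewrite iterS IH derM Dx raddf_sum.
under [X in _ = x * X]eq_bigr => i _ do rewrite twist_coefS.
rewrite big_split /= [X in _ = x * (X + _)]big_ord_recr /= twist_coef_small // raddf0 addr0.
rewrite [X in _ = x * (_ + X)]big_ord_recl /= add0r -mulr_sumr.
by rewrite mulrDr [_ * (x * f)]mulrC -mulrA.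
Qed.

Lemma twist_coef_convolution n l :
  \sum_(m < n.+1) (twist_coef m 1 * twist_coef (n - m) l) *+ 'C(n, m) =
  twist_coef n l.+1 *+ l.+1.
Proof.
elim: n l => [|n IH] l; first by rewrite big_ord1 !twist_coef0 /= !mul0rn mul0r.
rewrite (sum_binS (fun i j => twist_coef i 1 * twist_coef j l)).
have expand (m : 'I_n.+1) :
    twist_coef m.+1 1 * twist_coef (n - m) l + twist_coef m 1 * twist_coef (n.+1 - m) l =
    D (twist_coef m 1 * twist_coef (n - m) l) + f * (twist_coef m 0 * twist_coef (n - m) l)
    + twist_coef m 1 * (if l is l'.+1 then f * twist_coef (n - m) l' else 0).
  by rewrite subSn -1?ltnS // !twist_coefS derM; case: l {IH} => [|l] /=; ring.
under eq_bigr => m _ do rewrite expand !mulrnDl.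
rewrite !big_split /=.
under eq_bigr => m _ do rewrite -raddfMn.
rewrite -raddf_sum IH raddfMn twist_coefS /=.
rewrite big_ord_recl twist_coef0 subn0 bin0 mul1r mulr1n big1 ?addr0 => [|m _]; last first.
  by rewrite twist_coefS0 mul0r mulr0 mul0rn.
clear expand; case: l IH => [|l] IH /=.
  by rewrite big1 ?addr0 // => m _; rewrite mulr0 mul0rn.
under eq_bigr => m _ do rewrite mulrCA -mulrnAr.
by rewrite -mulr_sumr IH mulrnAr mulrnDl -addrA -mulrS.
Qed.

Lemma pchar_twist_coef p i : p \in [pchar A] -> (1 < i < p)%N ->
  twist_coef p i = 0.
Proof.
case: p => [/pcharf_prime //|q] pcharA.
case: i => [//|l] /andP[l_gt0 ltlq].
apply: (pchar_mulrn_eq0 (n := l.+1) pcharA); first by rewrite gtnNdvd.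
rewrite -twist_coef_convolution big_ord_recl big_ord_recr /= twist_coef0 mul0r mul0rn add0r.
rewrite subnn twist_coef0 eqn0Ngt -ltnS l_gt0 mulr0 mul0rn addr0.
by apply: big1 => m _; rewrite -mulr_natr bin_lt_pcharf_0 ?mulr0 //= ltnS.
Qed.

Lemma hochschild_formula p x : p \in [pchar A] -> D x = x * f ->
  iter p D x = x * (iter p.-1 D f + f ^+ p).
Proof.
move=> pcharA Dx; rewrite iter_der_twist //; congr (_ * _).
case: p pcharA => [/pcharf_prime //|[/pcharf_prime //|q]] pcharA.
rewrite big_ord_recl twist_coefS0 add0r big_ord_recl big_ord_recr /=.
rewrite twist_coefS1 twist_coefnn big1 ?add0r // => i _.
by apply: pchar_twist_coef pcharA _; rewrite /= !ltnS.
Qed.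

End HochschildFormula.
End Derivation.

Theorem mainTheorem15 (p : nat) (R A : comUnitRingType) (N M : nmodType)
  (phi : {rmorphism R -> A}) (alphaS : N -> R) (alphaX : M -> A) (beta : N -> M)
  (delta : M -> A) (der : A -> A) :
  prime p -> p \in [pchar R] -> p \in [pchar A] ->
  is_log_structure alphaS -> integral_monoid N ->
  is_log_structure alphaX -> integral_monoid M ->
  is_log_morphism phi alphaS alphaX beta ->
  is_log_derivation phi alphaX beta delta der ->
  is_log_derivation phi alphaX beta
    (logder_p_delta p delta der) (logder_p_der p der).
Proof.
move=> _ _ pcharA _ _ _ _ _ [derD derM derC [delta0 deltaD delta_beta delta_alpha]].
have der0 : der 0 = 0 by apply: (@addrI _ (der 0)); rewrite -derD !addr0.
pose D : {additive A -> A} := HB.pack der (GRing.isNmodMorphism.Build A A der (der0, derD)).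
have iterD n : nmod_morphism (iter n der) := iter_der_nmod_morphism D n.
have zero_pow : 0 ^+ p = 0 :> A by rewrite expr0n eqn0Ngt prime_gt0 ?(pcharf_prime pcharA).
rewrite /logder_p_der /logder_p_delta; split.
- exact: (iterD p).2.
- by move=> a b; apply: (@pchar_iter_derM _ D derM).
- by move=> r a; elim: p {pcharA zero_pow} => //= n ->.
split.
- by rewrite delta0 (iterD _).1 zero_pow addr0.
- by move=> m m'; rewrite deltaD (iterD _).2 -!(pFrobenius_autE pcharA) rmorphD addrACA.
- by move=> n; rewrite delta_beta (iterD _).1 zero_pow addr0.
- by move=> m; apply: (@hochschild_formula _ D derM).
Qed.
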